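(* In the setting of the imitative spectrum access dynamics, suppose the information sharing graph (equivalently, the cluster-based graph) is connected, and let $\boldsymbol{X}^*$ be an imitation equilibrium satisfying $U(m,\boldsymbol{X}^* )=U(i,\boldsymbol{X}^* )$ for all $m,i\in\Delta_k(\boldsymbol{X}^* )$ and all clusters $k$. Then all users achieve the same expected throughput: $U(a^*_n,\boldsymbol{X}^* )=U(a^*_{n'},\boldsymbol{X}^* )$ for all users $n,n'\in\mathcal{N}$, where $a^*_n$ is the channel chosen by user $n$ at $\boldsymbol{X}^*$. Equivalently, $U(m,\boldsymbol{X}^* )=U(i,\boldsymbol{X}^* )$ for all channels $m,i$ used by some user at $\boldsymbol{X}^*$.
   Context: There are $K$ clusters with sizes $z_k>0$ forming an undirected cluster-based graph; $\mathcal{C}_k$ is the set consisting of cluster $k$ and its neighboring clusters. A population state $\boldsymbol{X}=(\boldsymbol{X}^1,\dots,\boldsymbol{X}^K)$ has $X^k_m\ge0$, $\sum_mX^k_m=1$. $U(m,\boldsymbol{X})=\theta_mB_m\,g\big(\sum_kz_kX^k_m\big)$ is the expected throughput of a user on channel $m$, where $\theta_m\in(0,1)$, $B_m>0$ and $g(x)=\sum_{\lambda=1}^{\lambda_{\max}}\frac{1}{\lambda_{\max}}\left(\frac{\lambda_{\max}-\lambda}{\lambda_{\max}}\right)^{x-1}$. $\Delta_k(\boldsymbol{X}^* )=\{m: X^{h*}_m>0\text{ for some }h\in\mathcal{C}_k\}$. *)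

From Stdlib Require Import Reals Lra Relations.
Open Scope R_scope.

Fixpoint sumR (n : nat) (f : nat -> R) : R :=
  match n with
  | O => 0
  | S n' => sumR n' f + f n'
  end.

(* Real power b^y for a base b >= 0, with the convention 0^0 = 1 and
   0^y = 0 for y <> 0 (only used with b = 0 when lambda = lambda_max). *)
Definition rpow (b y : R) : R :=
  if Rle_dec b 0 then (if Req_EM_T y 0 then 1 else 0) else Rpower b y.

Definition g (lmax : nat) (x : R) : R :=
  sumR lmax (fun j => let lam := INR (S j) in
     / INR lmax * rpow ((INR lmax - lam) / INR lmax) (x - 1)).

(* Clusters are 0..K-1, channels are 0..M-1; a population state is
   X : nat -> nat -> R with X k m = X^k_m. *)

Definition U (K lmax : nat) (theta B z : nat -> R) (X : nat -> nat -> R)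
  (m : nat) : R :=
  theta m * B m * g lmax (sumR K (fun k => z k * X k m)).

Definition sym_graph (K : nat) (adj : nat -> nat -> Prop) : Prop :=
  forall a b, (a < K)%nat -> (b < K)%nat -> adj a b -> adj b a.

Definition graph_connected (K : nat) (adj : nat -> nat -> Prop) : Prop :=
  forall a b, (a < K)%nat -> (b < K)%nat ->
    clos_refl_trans nat (fun u v => (u < K)%nat /\ (v < K)%nat /\ adj u v) a b.

Definition pop_state (K M : nat) (X : nat -> nat -> R) : Prop :=
  forall k, (k < K)%nat ->
    (forall m, (m < M)%nat -> 0 <= X k m) /\ sumR M (fun m => X k m) = 1.

Definition inC (K : nat) (adj : nat -> nat -> Prop) (k h : nat) : Prop :=
  (h < K)%nat /\ (h = k \/ adj k h).

Definition inDelta (K M : nat) (adj : nat -> nat -> Prop)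
  (X : nat -> nat -> R) (k m : nat) : Prop :=
  (m < M)%nat /\ exists h, inC K adj k h /\ 0 < X h m.

Definition used (K M : nat) (X : nat -> nat -> R) (m : nat) : Prop :=
  (m < M)%nat /\ exists k, (k < K)%nat /\ 0 < X k m.

(* Within a cluster k, every channel used by k or by a neighbour of k lies in
   Delta_k, so the hypothesis makes the throughput equal on the channels used
   across any edge of the graph.  Every cluster uses some channel (its shares sum
   to 1), so along a path of clusters these equalities chain together, and
   connectivity links any two used channels.  Neither the shape of U nor the
   symmetry of the graph plays a role. *)

From Stdlib Require Import Reals Relations Lra Lia.
Open Scope R_scope.

Lemma sumR_gt0_exists (n : nat) (f : nat -> R) :
  0 < sumR n f -> exists m, (m < n)%nat /\ 0 < f m.
Proof.
  induction n as [|n IH]; simpl; intros Hsum; [lra|].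
  destruct (Rlt_dec 0 (f n)) as [Hfn|Hfn].
  - exists n; split; [lia|exact Hfn].
  - destruct IH as [m [Hm Hfm]]; [lra|].
    exists m; split; [lia|exact Hfm].
Qed.

Lemma pop_state_support (K M : nat) (X : nat -> nat -> R) :
  pop_state K M X ->
  forall k, (k < K)%nat -> exists c, (c < M)%nat /\ 0 < X k c.
Proof.
  intros HX k Hk; destruct (HX k Hk) as [_ Hsum].
  apply (sumR_gt0_exists M (fun m => X k m)); lra.
Qed.

Section LocallyConstant.

Variables (K M : nat) (adj : nat -> nat -> Prop) (X : nat -> nat -> R).
Variable f : nat -> R.

Hypothesis support : forall k, (k < K)%nat -> exists c, (c < M)%nat /\ 0 < X k c.
Hypothesis eq_on_Delta : forall k m i, (k < K)%nat ->
  inDelta K M adj X k m -> inDelta K M adj X k i -> f m = f i.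

Let step (u v : nat) : Prop := (u < K)%nat /\ (v < K)%nat /\ adj u v.

Lemma eq_on_neighbourhood k h m i :
  (k < K)%nat -> inC K adj k h ->
  (m < M)%nat -> 0 < X k m -> (i < M)%nat -> 0 < X h i -> f m = f i.
Proof.
  intros Hk Hkh Hm Xkm Hi Xhi.
  apply (eq_on_Delta k); trivial.
  - split; [exact Hm|]. exists k; split; [split; auto|exact Xkm].
  - split; [exact Hi|]. exists h; split; [exact Hkh|exact Xhi].
Qed.

Lemma eq_along_path a b :
  (a < K)%nat -> clos_refl_trans nat step a b ->
  forall m i, (m < M)%nat -> 0 < X a m -> (i < M)%nat -> 0 < X b i -> f m = f i.
Proof.
  intros Ha Hab; apply clos_rt_rtn1 in Hab.
  induction Hab as [|y w [Hy [Hw Hyw]] _ IH]; intros m i Hm Xam Hi Xwi.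
  - apply (eq_on_neighbourhood a a); auto. split; auto.
  - destruct (support y Hy) as [c [Hc Xyc]].
    transitivity (f c); [exact (IH m c Hm Xam Hc Xyc)|].
    apply (eq_on_neighbourhood y w); auto. split; auto.
Qed.

End LocallyConstant.

Theorem corollary1
  (K M lmax : nat) (z theta B : nat -> R) (adj : nat -> nat -> Prop)
  (X : nat -> nat -> R)
  (Hlmax : (1 <= lmax)%nat)
  (Hz : forall k, (k < K)%nat -> 0 < z k)
  (Htheta : forall m, (m < M)%nat -> 0 < theta m < 1)
  (HB : forall m, (m < M)%nat -> 0 < B m)
  (Hsym : sym_graph K adj)
  (Hconn : graph_connected K adj)
  (HX : pop_state K M X)
  (Heq : forall k m i, (k < K)%nat ->
      inDelta K M adj X k m -> inDelta K M adj X k i ->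
      U K lmax theta B z X m = U K lmax theta B z X i) :
  forall m i, used K M X m -> used K M X i ->
    U K lmax theta B z X m = U K lmax theta B z X i.
Proof.
  intros m i [Hm [k1 [Hk1 Xk1m]]] [Hi [k2 [Hk2 Xk2i]]].
  apply (eq_along_path K M adj X _ (pop_state_support K M X HX) Heq k1 k2);
    auto.
Qed.
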